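(* Let a constant $\lambda>0$ and a function $\ell=\ell(n)=o(\log n)$ be given. If $n$ is large enough then, whenever $E_0$, $E_1$ and $\{e\}$ are disjoint sets of possible edges of $\tilde G=\tilde G(n,\ell,\lambda)$ with $|E_1|\le n^{1/3}$ such that $E_1\cup\{e\}$ contains no cycle of length at most $\ell$, we have \[ (1-n^{-1/4})\lambda/n\ \le\ \Pr\bigl(e\in E(\tilde G)\ \big|\ E_1\subset E(\tilde G)\subset E_0^{c}\bigr)\ \le\ \lambda/n . \]
   Context: $G(n,p)$ is the Erdős–Rényi random graph on vertex set $[n]$ with each possible edge present independently with probability $p$. $\tilde G(n,\ell,\lambda)$ is the random graph whose distribution is that of $G(n,\lambda/n)$ conditioned on containing no cycle of length at most $\ell$. $E_0^{c}$ denotes the complement of $E_0$ in the set of all possible edges. *)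

From HB Require Import structures.
From mathcomp Require Import all_boot all_order all_algebra.
From mathcomp Require Import all_classical all_reals all_analysis.
Set Implicit Arguments. Unset Strict Implicit. Unset Printing Implicit Defensive.
Import Order.TTheory GRing.Theory Num.Theory.
Local Open Scope ring_scope.

(* Possible edges of a graph on vertex set [n] = 'I_n: unordered pairs {u,v},
   u <> v, encoded as ordered pairs (u,v) with u < v. *)
Notation edge n := {x : 'I_n * 'I_n | (x.1 < x.2)%N}.

Definition adj n (G : {set edge n}) (u v : 'I_n) : bool :=
  [exists x in G, (val x == (u, v)) || (val x == (v, u))].

Definition has_short_cycle n (l : nat) (G : {set edge n}) : bool :=
  [exists k : 'I_l.+1, (3 <= k)%N &&
    [exists f : {ffun 'I_k -> 'I_n},
       injectiveb f && [forall i : 'I_k, adj G (f i) (f (ordS i))]]].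

Definition gnp_weight (R : realType) n (p : R) (G : {set edge n}) : R :=
  p ^+ #|G| * (1 - p) ^+ (#|[set: edge n]| - #|G|)%N.

Definition gtilde_prob (R : realType) n (l : nat) (lam : R)
    (A : pred {set edge n}) : R :=
  (\sum_(G : {set edge n} | A G && ~~ has_short_cycle l G)
      gnp_weight (lam / n%:R) G) /
  (\sum_(G : {set edge n} | ~~ has_short_cycle l G) gnp_weight (lam / n%:R) G).

Definition gtilde_cond (R : realType) n (l : nat) (lam : R)
    (A B : pred {set edge n}) : R :=
  gtilde_prob l lam (predI A B) / gtilde_prob l lam B.

From mathcomp Require Import zify ring lra.
From HB Require Import structures.
From mathcomp Require Import all_boot all_order all_algebra.
From mathcomp Require Import all_classical all_reals all_analysis.
Import Order.TTheory GRing.Theory Num.Theory.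
Local Open Scope ring_scope.
Set Implicit Arguments. Unset Strict Implicit. Unset Printing Implicit Defensive.

Local Notation fsubsetP := fintype.subsetP.

(* Write p = lam/n, q = p/(1-p), and call G admissible if E1 ⊆ G ⊆ ~E0, e ∉ G
   and G has no cycle of length at most l.  Adding e multiplies the G(n,p)
   weight by q, so the conditional probability is q S' / (q S' + S), where S is
   the weight of the admissible graphs and S' that of those G for which G + e
   still has no short cycle.  This is at most p as S' <= S, and at least
   (1 - eta) p once S - S' <= eta S.
   If G + e has a short cycle, the cycle passes through e and leaves e ∪ E1.
   Record the positions T of its edges outside e ∪ E1 and the cycle vertices
   next to them: the code forces |T| distinct edges into G, which costs q^|T|;
   a vertex between two recorded edges is arbitrary (n choices), a vertex next
   to one recorded edge is an end of an edge of e ∪ E1 (a set W of size at most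
   2|E1| + 2), and there are at least two of the latter.  Summing over codes
   gives eta = (l+1) (|W|^2/n) (nq+1)^l, which is at most n^(-1/4) for large n
   since |W| = O(n^(1/3)) and l = o(log n). *)

Section Graphs.
Variable n : nat.
Implicit Types (G H : {set edge n}) (x y : edge n) (a b c d : 'I_n).

Definition ends x a b := (val x == (a, b)) || (val x == (b, a)).

Lemma adjP G a b : reflect (exists2 x, x \in G & ends x a b) (adj G a b).
Proof.
apply: (iffP existsP) => [[x /andP[xG xe]]|[x xG xe]]; exists x => //.
by rewrite xG.
Qed.

Lemma adjU1 x G a b : adj (x |: G) a b = ends x a b || adj G a b.
Proof.
apply/adjP/orP => [[y /setU1P[->|yG] ye]|[xe|/adjP[y yG ye]]]; first by left.
- by right; apply/adjP; exists y.
- by exists x; rewrite ?setU11.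
- by exists y; rewrite ?setU1r.
Qed.

Lemma adjS G H a b : G \subset H -> adj G a b -> adj H a b.
Proof. by move=> /fsubsetP sGH /adjP[x /sGH xH xe]; apply/adjP; exists x. Qed.

Lemma has_short_cycleS l G H :
  G \subset H -> has_short_cycle l G -> has_short_cycle l H.
Proof.
move=> sGH /existsP[k /andP[k3 /existsP[f /andP[finj /forallP fa]]]].
apply/existsP; exists k; rewrite k3; apply/existsP; exists f; rewrite finj.
by apply/forallP=> i; apply: adjS sGH (fa i).
Qed.

Lemma ends_eq x a b c d : ends x a b -> ends x c d ->
  (a = c /\ b = d) \/ (a = d /\ b = c).
Proof.
rewrite /ends; case: (val x) => x1 x2.
by case/orP => /eqP[<- <-]; case/orP => /eqP[-> ->]; auto.
Qed.

Lemma ends_inj x y a b : ends x a b -> ends y a b -> x = y.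
Proof.
move=> hx hy; apply: val_inj; move: hx hy (valP x) (valP y); rewrite /ends.
case: (val x) => x1 x2; case: (val y) => y1 y2 /=.
case/orP => /eqP[-> ->]; case/orP => /eqP[-> ->] //= h1 h2;
  by have := ltn_trans h1 h2; rewrite ltnn.
Qed.

End Graphs.

Section Weights.
Variables (R : realType) (n : nat) (p : R).
Implicit Types (G H F : {set edge n}).

Lemma gnp_weight_ge0 G : 0 <= p <= 1 -> 0 <= gnp_weight p G.
Proof.
by case/andP=> p0 p1; rewrite /gnp_weight mulr_ge0 // exprn_ge0 // subr_ge0.
Qed.

Lemma gnp_weight_gt0 G : 0 < p < 1 -> 0 < gnp_weight p G.
Proof.
by case/andP=> p0 p1; rewrite /gnp_weight mulr_gt0 // exprn_gt0 // subr_gt0.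
Qed.

Lemma gnp_weightU H F : p != 1 -> [disjoint H & F] ->
  gnp_weight p (H :|: F) = (p / (1 - p)) ^+ #|F| * gnp_weight p H.
Proof.
move=> p1 dHF; rewrite /gnp_weight.
have cardHF : #|H :|: F| = (#|H| + #|F|)%N.
  by rewrite cardsU (disjoint_setI0 dHF) cards0 subn0.
have leHF : (#|H| + #|F| <= #|[set: edge n]|)%N.
  by rewrite -cardHF subset_leq_card // subsetT.
set N := #|[set: edge n]| in leHF *.
have -> : (N - #|H|)%N = (N - (#|H| + #|F|) + #|F|)%N by lia.
have q0 : (1 - p) ^+ #|F| != 0 by rewrite expf_neq0 // subr_eq0 eq_sym.
by rewrite cardHF !exprD expr_div_n [RHS]mulrC !mulrA (mulrAC _ _ (p ^+ _)) mulfK // mulrAC.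
Qed.

Lemma sum_gnp_weight_supsets (P : pred {set edge n}) F : p != 1 ->
  \sum_(G | P G && (F \subset G)) gnp_weight p G =
  (p / (1 - p)) ^+ #|F| * \sum_(H | P (H :|: F) && [disjoint H & F]) gnp_weight p H.
Proof.
move=> p1; rewrite (reindex_onto (fun H => H :|: F) (fun G => G :\: F)) /=; last first.
  by move=> G /andP[_ sFG]; rewrite finset.setUC -[RHS](finset.setID G F) (finset.setIidPr sFG).
rewrite big_distrr /=; apply: eq_big => H.
  rewrite finset.subsetUr finset.setDUl finset.setDv finset.setU0 andbT.
  by congr (_ && _); apply/eqP/finset.setDidPl.
rewrite finset.setDUl finset.setDv finset.setU0 => /andP[_ /eqP dHF].
by rewrite gnp_weightU //; apply/finset.setDidPl.
Qed.

End Weights.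

Section Sums.
Variable R : numDomainType.

Lemma ler_sum_term (I : finType) (P : pred I) (F : I -> R) i0 :
  P i0 -> (forall i, P i -> 0 <= F i) -> F i0 <= \sum_(i | P i) F i.
Proof.
move=> Pi0 F_ge0; rewrite (bigD1 i0) //= lerDl sumr_ge0 // => i /andP[Pi _].
exact: F_ge0.
Qed.

Lemma ler_sum_subpred (I : finType) (P Q : pred I) (F : I -> R) :
  (forall i, P i -> Q i) -> (forall i, Q i -> 0 <= F i) ->
  \sum_(i | P i) F i <= \sum_(i | Q i) F i.
Proof.
move=> PQ F_ge0; rewrite [X in _ <= X](bigID P) /=.
rewrite (eq_bigl P) => [|i]; last by case Pi: (P i); rewrite ?andbT ?andbF ?PQ.
by rewrite lerDl sumr_ge0 // => i /andP[Qi _]; apply: F_ge0.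
Qed.

End Sums.

Section CountingSums.
Variable R : comPzSemiRingType.

Lemma sum_exp_card_sets k (x : R) : \sum_(T : {set 'I_k}) x ^+ #|T| = (x + 1) ^+ k.
Proof.
rewrite -[in RHS](card_ord k) -prodr_const bigA_distr.
by apply: eq_bigr => T _; rewrite -big_mkcond /= prodr_const.
Qed.

Lemma sum_family_const k n (A : 'I_k -> {set 'I_n}) (c : R) :
  \sum_(h : {ffun 'I_k -> 'I_n} | h \in family A) c = c * \prod_(i < k) #|A i|%:R.
Proof.
have -> : \prod_(i < k) (#|A i|%:R : R) = \prod_(i < k) \sum_(j in A i) 1.
  by apply: eq_bigr => i _; rewrite sumr_const.
rewrite bigA_distr_big_dep /= mulr_sumr.
by apply: eq_bigr => h _; rewrite prodr_const expr1n mulr1.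
Qed.

End CountingSums.


Section CyclicOrdinals.
Variable k : nat.
Implicit Types (i j : 'I_k) (T : {set 'I_k}).

Definition has_exit T := [exists i, (i \in T) && (ordS i \notin T)].

Lemma iter_ordS i t : val (iter t (@ordS k) i) = ((i + t) %% k)%N.
Proof.
elim: t => [|t IH] /=; first by rewrite addn0 modn_small.
by rewrite IH -addn1 modnDml addn1 addnS.
Qed.

Lemma has_exitP T i j : i \in T -> j \notin T -> has_exit T.
Proof.
move=> iT jT; apply: contraNT jT => /existsPn noexit.
have ordS_closed i' : i' \in T -> ordS i' \in T.
  by move=> i'T; have := noexit i'; rewrite i'T negbK.
have -> : j = iter (j + k - i) (@ordS k) i.
  apply: val_inj; rewrite iter_ordS.
  have -> : (i + (j + k - i) = j + k)%N by have := ltn_ord i; lia.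
  by rewrite modnDr modn_small.
by elim: (j + k - i)%N => //= t; apply: ordS_closed.
Qed.

Lemma ordS2_neq i : (2 < k)%N -> ordS (ordS i) != i.
Proof.
move=> k3; apply/negP => /eqP /(congr1 val).
rewrite -[ordS (ordS i)]/(iter 2 (@ordS k) i) iter_ordS /=.
have ik := ltn_ord i; have [lt|ge] := ltnP (i + 2) k.
  by rewrite modn_small //; lia.
have -> : (i + 2 = (i + 2 - k) + k)%N by lia.
by rewrite modnDr modn_small; lia.
Qed.

Definition inner T := [set i | (ord_pred i \in T) && (i \in T)].
Definition exits T := [set i | (ord_pred i \in T) && (i \notin T)].
Definition entries T := [set i | (ord_pred i \notin T) && (i \in T)].

Lemma card_inner_entries T : #|T| = (#|inner T| + #|entries T|)%N.
Proof.
rewrite -(cardsID [set i | ord_pred i \in T] T); congr (_ + _)%N;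
  by apply: eq_card => i; rewrite !inE andbC.
Qed.

Lemma card_inner_exits T : #|T| = (#|inner T| + #|exits T|)%N.
Proof.
rewrite -(card_preimset T (@ord_pred_inj k)) -(cardsID T (@ord_pred k @^-1: T)).
by congr (_ + _)%N; apply: eq_card => i; rewrite !inE andbC.
Qed.

Lemma card_exits_gt0 T : has_exit T -> (0 < #|exits T|)%N.
Proof.
case/existsP => i /andP[iT iT']; apply/card_gt0P; exists (ordS i).
by rewrite !inE ordSK iT.
Qed.

End CyclicOrdinals.

Lemma prod_cycle_weights (R : comPzSemiRingType) k (T : {set 'I_k}) (a b : R) :
  \prod_(i < k) (if (ord_pred i \in T) && (i \in T) then a
                 else if (ord_pred i \in T) || (i \in T) then b else 1)
  = a ^+ #|inner T| * b ^+ (#|exits T| + #|entries T|).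
Proof.
have prod_const (P : pred 'I_k) c : \prod_(i | P i) c = c ^+ #|[set i | P i]|.
  by rewrite -prodr_const; apply: eq_bigl => i; rewrite inE.
rewrite (bigID (fun i => ord_pred i \in T)) /=.
rewrite (bigID (fun i => i \in T)) /= [X in _ * X](bigID (fun i => i \in T)) /=.
rewrite (eq_bigr (fun=> a)); last by move=> i /andP[-> ->].
rewrite [X in _ * X * _](eq_bigr (fun=> b)); last by move=> i /andP[-> /negbTE ->].
rewrite [X in _ * (X * _)](eq_bigr (fun=> b)); last by move=> i /andP[/negbTE -> ->].
rewrite [X in _ * (_ * X)](eq_bigr (fun=> 1)); last by move=> i /andP[/negbTE -> /negbTE ->].
by rewrite !prod_const expr1n mulr1 -mulrA exprD.
Qed.

(* The boundary vertices of the recorded arcs come in pairs (an exit and an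
   entry per arc) and there is at least one arc, whence the factor b^2/a. *)
Lemma prod_cycle_weights_le (R : realFieldType) k (T : {set 'I_k}) (a b q : R) :
  0 <= q -> 0 < a -> 0 <= b -> b ^+ 2 <= a -> has_exit T ->
  q ^+ #|T| * \prod_(i < k) (if (ord_pred i \in T) && (i \in T) then a
        else if (ord_pred i \in T) || (i \in T) then b else 1)
   <= (b ^+ 2 / a) * (a * q) ^+ #|T|.
Proof.
move=> q0 a0 b0 ba exitT.
have r0 : 0 <= b ^+ 2 / a by rewrite divr_ge0 ?exprn_ge0 // ltW.
have r1 : b ^+ 2 / a <= 1 by rewrite ler_pdivrMr // mul1r.
have entries_exits : #|entries T| = #|exits T|.
  by apply/eqP; rewrite -(eqn_add2l #|inner T|) -card_inner_entries -card_inner_exits.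
rewrite prod_cycle_weights entries_exits addnn -mul2n exprM.
have -> : q ^+ #|T| * (a ^+ #|inner T| * (b ^+ 2) ^+ #|exits T|)
    = (b ^+ 2 / a) ^+ #|exits T| * (a * q) ^+ #|T|.
  rewrite (card_inner_exits T) !exprMn !exprD exprVn.
  have an : a ^+ #|exits T| != 0 by rewrite expf_neq0 // gt_eqF.
  move: (a ^+ #|exits T|) an (a ^+ #|inner T|) (b ^+ #|exits T|) => A2 an A1 B.
  move: (q ^+ #|inner T|) (q ^+ #|exits T|) => Q1 Q2.
  by field.
rewrite ler_wpM2r ?exprn_ge0 ?mulr_ge0 ?(ltW a0) //.
by rewrite -[X in _ <= X]expr1 ler_wiXn2l // card_exits_gt0.
Qed.

Section Codes.
Variable n : nat.
Implicit Types (E G : {set edge n}) (e x : edge n).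

Definition touched E : {set 'I_n} :=
  [set a | [exists x in E, ((val x).1 == a) || ((val x).2 == a)]].

Lemma card_touched E : (#|touched E| <= 2 * #|E|)%N.
Proof.
have sub : touched E \subset [set (val x).1 | x in E] :|: [set (val x).2 | x in E].
  apply/fsubsetP => a; rewrite inE => /existsP[x /andP[xE /orP[]/eqP <-]];
    rewrite inE; apply/orP; [left|right]; exact: imset_f.
apply: leq_trans (subset_leq_card sub) _; apply: leq_trans (leq_card_setU _ _) _.
by rewrite mul2n -addnn leq_add ?leq_imset_card.
Qed.

Lemma ends_touched E x a b : x \in E -> ends x a b ->
  (a \in touched E) && (b \in touched E).
Proof.
move=> xE; rewrite /ends !inE.
by case/orP => /eqP ex; apply/andP; split; apply/existsP; exists x;
  rewrite xE ex ?eqxx ?orbT.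
Qed.

(* A code (T, h) for a cycle of length k records the positions T of its edges
   outside e |: E1 and their end vertices; every other vertex is mapped to the
   dummy vertex u. *)
Definition code_range (u : 'I_n) (W : {set 'I_n}) k (T : {set 'I_k}) (i : 'I_k) :=
  if (ord_pred i \in T) && (i \in T) then [set: 'I_n]
  else if (ord_pred i \in T) || (i \in T) then W else [set u].

Definition code_edges k (T : {set 'I_k}) (h : {ffun 'I_k -> 'I_n}) : {set edge n} :=
  [set x | [exists i in T, ends x (h i) (h (ordS i))]].

Definition valid_code e E1 k (T : {set 'I_k}) (h : {ffun 'I_k -> 'I_n}) :=
  [&& has_exit T, h \in family (code_range (val e).1 (touched (e |: E1)) T),
      (#|T| <= #|code_edges T h|)%N & [disjoint code_edges T h & E1]].

Section CycleCode.
Variables (E1 G : {set edge n}) (e : edge n) (k : nat) (f : {ffun 'I_k -> 'I_n}).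
Hypothesis f_inj : injective f.
Hypothesis f_cycle : forall i, adj (e |: G) (f i) (f (ordS i)).

Let T := [set i | ~~ adj (e |: E1) (f i) (f (ordS i))].
Let h := [ffun i => if (i \in T) || (ord_pred i \in T) then f i else (val e).1].

Let h_onT i : i \in T -> h i = f i /\ h (ordS i) = f (ordS i).
Proof. by move=> iT; rewrite !ffunE iT ordSK iT orbT. Qed.

Let cycle_edge_in_G i : i \in T -> exists2 x, x \in G & ends x (f i) (f (ordS i)).
Proof.
rewrite inE adjU1 negb_or => /andP[ne _].
by move: (f_cycle i); rewrite adjU1 (negbTE ne) => /adjP.
Qed.

Let touched_offT i : i \notin T ->
  (f i \in touched (e |: E1)) && (f (ordS i) \in touched (e |: E1)).
Proof. by rewrite inE negbK => /adjP[x xS xe]; exact: ends_touched xS xe. Qed.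

Lemma cycle_code_family : h \in family (code_range (val e).1 (touched (e |: E1)) T).
Proof.
apply/familyP => i; rewrite /code_range ffunE.
case pT: (ord_pred i \in T); case iT: (i \in T) => /=;
  [by rewrite inE | | | by rewrite inE].
  by case/andP: (touched_offT (negbT iT)).
by case/andP: (touched_offT (negbT pT)); rewrite ord_predK.
Qed.

Lemma cycle_code_edgesS : code_edges T h \subset G.
Proof.
apply/fsubsetP => x; rewrite inE => /existsP[i /andP[iT]].
case: (h_onT iT) => -> -> xe; case: (cycle_edge_in_G iT) => y yG ye.
by rewrite (ends_inj xe ye).
Qed.

Lemma cycle_code_edges_disjoint : [disjoint code_edges T h & E1].
Proof.
rewrite -setI_eq0; apply/eqP/setP => x; rewrite !inE; apply/negP.
case/andP => /existsP[i /andP[iT xe]] xE1.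
move: (iT); rewrite inE adjU1 negb_or => /andP[_ /adjP]; apply.
by case: (h_onT iT) xe => -> ->; exists x.
Qed.

(* The edges f i -- f (ordS i), i in T, are pairwise distinct since the cycle
   has length at least 3. *)
Lemma cycle_code_card : (2 < k)%N -> (#|T| <= #|code_edges T h|)%N.
Proof.
move=> k3; pose g i := odflt e [pick x in G | ends x (f i) (f (ordS i))].
have gP i : i \in T -> ends (g i) (f i) (f (ordS i)).
  move=> iT; rewrite /g; case: pickP => [x /andP[_ ->] //|].
  by case: (cycle_edge_in_G iT) => x xG xe /(_ x); rewrite xG xe.
have -> : #|T| = #|g @: T|.
  apply/esym/card_in_imset => i j iT jT gij.
  have := gP j jT; rewrite -gij => /(ends_eq (gP i iT)) [[/f_inj //]|[eij eji]].
  by have := ordS2_neq j k3; rewrite -(f_inj eij) (f_inj eji) eqxx.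
apply/subset_leq_card/fsubsetP => x /imsetP[i iT ->]; rewrite inE.
by apply/existsP; exists i; rewrite iT; case: (h_onT iT) => -> ->; apply: gP.
Qed.

Lemma cycle_code_exit :
  ~~ [forall i, adj (e |: E1) (f i) (f (ordS i))] ->
  ~~ [forall i, adj G (f i) (f (ordS i))] -> has_exit T.
Proof.
move=> /forallPn[i iT] /forallPn[j jG]; apply: (@has_exitP _ _ i j); first by rewrite inE.
by apply: contra jG => /cycle_edge_in_G[x xG xe]; apply/adjP; exists x.
Qed.

Lemma cycle_code : (2 < k)%N ->
  ~~ [forall i, adj (e |: E1) (f i) (f (ordS i))] ->
  ~~ [forall i, adj G (f i) (f (ordS i))] ->
  exists (T' : {set 'I_k}) (h' : {ffun 'I_k -> 'I_n}),
    valid_code e E1 T' h' && (code_edges T' h' \subset G).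
Proof.
move=> k3 notE1 notG; exists T, h.
by rewrite /valid_code cycle_code_exit // cycle_code_family cycle_code_card //
  cycle_code_edges_disjoint cycle_code_edgesS.
Qed.

End CycleCode.

Lemma short_cycle_code l E1 G e :
  ~~ has_short_cycle l G -> ~~ has_short_cycle l (e |: E1) ->
  has_short_cycle l (e |: G) ->
  exists (k : 'I_l.+1) (T : {set 'I_k}) (h : {ffun 'I_k -> 'I_n}),
    valid_code e E1 T h && (code_edges T h \subset G).
Proof.
move=> noG noE1 /existsP[k /andP[k3 /existsP[f /andP[f_inj /forallP f_cycle]]]].
have cycle_in H : [forall i, adj H (f i) (f (ordS i))] -> has_short_cycle l H.
  by move=> fH; apply/existsP; exists k; rewrite k3; apply/existsP; exists f; rewrite f_inj.
exists k; apply: cycle_code => //; first exact/injectiveP.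
- by apply: contra noE1; apply: cycle_in.
- by apply: contra noG; apply: cycle_in.
Qed.

End Codes.

Lemma card_code_range n (u : 'I_n) (W : {set 'I_n}) k (T : {set 'I_k}) i :
  #|code_range u W T i| =
  if (ord_pred i \in T) && (i \in T) then n
  else if (ord_pred i \in T) || (i \in T) then #|W| else 1%N.
Proof.
by rewrite /code_range; case: ifP => _; [|case: ifP => _]; rewrite ?cardsT ?card_ord ?cards1.
Qed.

Lemma sum_codes_le (R : realFieldType) n l (q : R) (u : 'I_n) (W : {set 'I_n}) :
  0 <= q -> (0 < n)%N -> (#|W|%:R : R) ^+ 2 <= n%:R ->
  \sum_(k < l.+1) \sum_(T : {set 'I_k} | has_exit T)
     q ^+ #|T| * \prod_(i < k) (#|code_range u W T i|%:R : R)
   <= (l.+1)%:R * ((#|W|%:R : R) ^+ 2 / n%:R) * (n%:R * q + 1) ^+ l.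
Proof.
move=> q_ge0 n_gt0 Wn; set K := (#|W|%:R : R) ^+ 2 / n%:R.
rewrite -mulrA -[l.+1 in leRHS](card_ord l.+1) mulr_natl -sumr_const.
apply: ler_sum => k _.
have K_ge0 : 0 <= K by rewrite divr_ge0 ?exprn_ge0.
apply: (@le_trans _ _ (\sum_(T : {set 'I_k}) K * (n%:R * q) ^+ #|T|)).
  rewrite [leRHS](bigID (@has_exit k)) /= -[leLHS]addr0.
  apply: lerD; last by apply: sumr_ge0 => T _; rewrite mulr_ge0 ?exprn_ge0 ?mulr_ge0.
  apply: ler_sum => T exitT.
  have -> : \prod_(i < k) (#|code_range u W T i|%:R : R) =
      \prod_(i < k) (if (ord_pred i \in T) && (i \in T) then n%:R
                     else if (ord_pred i \in T) || (i \in T) then #|W|%:R else 1).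
    by apply: eq_bigr => i _; rewrite card_code_range; case: ifP => _; [|case: ifP].
  by apply: prod_cycle_weights_le; rewrite ?ltr0n.
rewrite -mulr_sumr sum_exp_card_sets ler_wpM2l // ler_weXn2l // ?lerDr ?mulr_ge0 //.
by rewrite -ltnS.
Qed.

Definition admissible n l (E0 E1 : {set edge n}) (e : edge n) (G : {set edge n}) :=
  [&& E1 \subset G, G \subset ~: E0, ~~ has_short_cycle l G & e \notin G].

Lemma admissibleUl n l (E0 E1 : {set edge n}) (e : edge n) (H F : {set edge n}) :
  [disjoint F & E1] -> admissible l E0 E1 e (H :|: F) -> admissible l E0 E1 e H.
Proof.
move=> dFE1 /and4P[E1HF HFE0 noHF eHF]; apply/and4P; split.
- apply/fsubsetP => x xE1; move/fsubsetP/(_ x xE1): E1HF; rewrite inE => /orP[//|xF].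
  by move: dFE1; rewrite -setI_eq0 => /eqP/setP/(_ x); rewrite !inE xF xE1.
- exact: fintype.subset_trans (finset.subsetUl _ _) HFE0.
- by apply: contra noHF; apply/has_short_cycleS/finset.subsetUl.
- by apply: contra eHF; rewrite inE => ->.
Qed.

Section BadGraphs.
Variables (R : realType) (n l : nat) (p : R) (E0 E1 : {set edge n}) (e : edge n).
Hypotheses (p_ge0 : 0 <= p) (p_le_half : p <= 2^-1).

Local Notation q := (p / (1 - p)).
Local Notation adm := (admissible l E0 E1 e).
Local Notation choices := (code_range (val e).1 (touched (e |: E1))).

Let p_lt1 : p < 1.
Proof. by have := p_le_half; lra. Qed.

Let w_ge0 (G : {set edge n}) : 0 <= gnp_weight p G.
Proof. by apply: gnp_weight_ge0; rewrite p_ge0 ltW. Qed.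

Let q_ge0 : 0 <= q.
Proof. by rewrite divr_ge0 // subr_ge0 ltW. Qed.

Lemma sum_code_supsets_le k (T : {set 'I_k}) h : valid_code e E1 T h ->
  \sum_(G | adm G && (code_edges T h \subset G)) gnp_weight p G <=
  q ^+ #|T| * \sum_(G | adm G) gnp_weight p G.
Proof.
case/and4P => _ _ cardT disjE1.
have q_le1 : q <= 1 by rewrite ler_pdivrMr ?subr_gt0 // mul1r; have := p_le_half; lra.
rewrite sum_gnp_weight_supsets ?lt_eqF //.
apply: ler_pM; rewrite ?exprn_ge0 ?sumr_ge0 ?ler_wiXn2l //.
by apply: ler_sum_subpred => [H /andP[/(admissibleUl disjE1)]|].
Qed.

Lemma sum_bad_le_codes : ~~ has_short_cycle l (e |: E1) ->
  \sum_(G | adm G && has_short_cycle l (e |: G)) gnp_weight p G <=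
  \sum_(k < l.+1) \sum_(T : {set 'I_k}) \sum_(h | valid_code e E1 T h)
     \sum_(G | adm G && (code_edges T h \subset G)) gnp_weight p G.
Proof.
move=> noE1.
pose J k (T : {set 'I_k}) h (G : {set edge n}) :=
  if valid_code e E1 T h && (code_edges T h \subset G) then gnp_weight p G else 0.
have J_ge0 k T h G : 0 <= J k T h G by rewrite /J; case: ifP.
have -> : \sum_(k < l.+1) \sum_(T : {set 'I_k}) \sum_(h | valid_code e E1 T h)
     \sum_(G | adm G && (code_edges T h \subset G)) gnp_weight p G =
  \sum_(G | adm G) \sum_(k < l.+1) \sum_(T : {set 'I_k}) \sum_h J k T h G.
  rewrite exchange_big; apply: eq_bigr => k _ /=.
  rewrite exchange_big; apply: eq_bigr => T _ /=.
  rewrite exchange_big big_mkcond; apply: eq_bigr => h _ /=.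
  rewrite /J; case: (valid_code e E1 T h) => /=; last by rewrite big1.
  by rewrite big_mkcondr.
apply: (@le_trans _ _ (\sum_(G | adm G && has_short_cycle l (e |: G))
    \sum_(k < l.+1) \sum_(T : {set 'I_k}) \sum_h J k T h G)); last first.
  by apply: ler_sum_subpred => [G /andP[] //|G _]; do 3 (apply: sumr_ge0 => * ).
apply: ler_sum => G /andP[admG badG]; case/and4P: (admG) => _ _ noG _.
have [k [T [h /andP[validTh subG]]]] := short_cycle_code noG noE1 badG.
apply: le_trans (ler_sum_term (i0 := k) _ _) => // [|? _]; last by do 2 apply: sumr_ge0 => ? _.
apply: le_trans (ler_sum_term (i0 := T) _ _) => // [|? _]; last by apply: sumr_ge0 => ? _.
by apply: le_trans (ler_sum_term (i0 := h) _ _) => //; rewrite /J validTh subG.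
Qed.

Lemma sum_bad_le : ~~ has_short_cycle l (e |: E1) ->
  \sum_(G | adm G && has_short_cycle l (e |: G)) gnp_weight p G <=
  (\sum_(G | adm G) gnp_weight p G) *
  \sum_(k < l.+1) \sum_(T : {set 'I_k} | has_exit T)
     q ^+ #|T| * \prod_(i < k) #|choices T i|%:R.
Proof.
move=> noE1; apply: le_trans (sum_bad_le_codes noE1) _.
rewrite mulr_sumr; apply: ler_sum => k _; rewrite mulr_sumr [leRHS]big_mkcond /=.
apply: ler_sum => T _; case: ifP => [exitT|noexit]; last first.
  by rewrite big_pred0 // => h; rewrite /valid_code noexit.
apply: le_trans (ler_sum _ (fun h => @sum_code_supsets_le k T h)) _.
apply: le_trans (ler_sum_subpred (Q := fun h => h \in family (choices T)) _ _) _.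
- by move=> h /and4P[].
- by move=> h _; rewrite mulr_ge0 ?exprn_ge0 ?sumr_ge0.
by rewrite sum_family_const [_ ^+ _ * _]mulrC -mulrA.
Qed.

End BadGraphs.

Lemma has_short_cycle0 n l : has_short_cycle l (finset.set0 : {set edge n}) = false.
Proof.
apply/negbTE/existsPn => k; apply/andP => -[k3 /existsP[f /andP[_ /forallP f_cycle]]].
by case/adjP: (f_cycle (Ordinal (ltn_trans (isT : 0 < 2)%N k3))) => x; rewrite inE.
Qed.

Lemma gtilde_condE (R : realType) n l (lam : R) (A B : pred {set edge n}) :
  0 < lam / n%:R < 1 ->
  gtilde_cond l lam A B =
  (\sum_(G | (A G && B G) && ~~ has_short_cycle l G) gnp_weight (lam / n%:R) G) /
  (\sum_(G | B G && ~~ has_short_cycle l G) gnp_weight (lam / n%:R) G).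
Proof.
move=> p01; rewrite /gtilde_cond /gtilde_prob.
set Z := \sum_(G | ~~ has_short_cycle l G) _.
suff Z_gt0 : 0 < Z by rewrite invf_div mulrA divfK // gt_eqF.
apply: lt_le_trans (ler_sum_term (i0 := finset.set0) _ _) => [|//|G _].
- exact: gnp_weight_gt0.
- by rewrite has_short_cycle0.
- by apply: gnp_weight_ge0; case/andP: p01 => /ltW -> /ltW.
Qed.

Section EdgeSums.
Variables (R : realType) (n l : nat) (p : R) (E0 E1 : {set edge n}) (e : edge n).
Hypotheses (p_neq1 : p != 1) (eE0 : e \notin E0) (eE1 : e \notin E1).

Local Notation adm := (admissible l E0 E1 e).
Local Notation cond G := ((E1 \subset G) && (G \subset ~: E0)).

Lemma admissibleU1 H :
  (cond (H :|: [set e]) && ~~ has_short_cycle l (H :|: [set e])) && [disjoint H & [set e]]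
  = adm H && ~~ has_short_cycle l (e |: H).
Proof.
rewrite finset.setUC disjoint_sym disjoints1 /admissible.
rewrite finset.subUset finset.sub1set inE eE0 /= -subDset.
have -> : E1 :\: [set e] = E1 by apply/finset.setDidPl; rewrite disjoint_sym disjoints1.
case: (E1 \subset H) (H \subset ~: E0) => [] [] //=.
case noeH: (has_short_cycle l (e |: H)) => /=; first by rewrite andbF.
suff -> : has_short_cycle l H = false by rewrite andbT.
by apply: contraFF noeH; apply/has_short_cycleS/finset.subsetUr.
Qed.

Lemma sum_edge_in :
  \sum_(G : {set edge n} | (e \in G) && cond G && ~~ has_short_cycle l G) gnp_weight p G =
  p / (1 - p) * \sum_(G | adm G && ~~ has_short_cycle l (e |: G)) gnp_weight p G.
Proof.
rewrite (eq_bigl (fun G : {set edge n} =>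
  (cond G && ~~ has_short_cycle l G) && ([set e] \subset G))).
  by rewrite sum_gnp_weight_supsets // cards1 expr1; under eq_bigl do rewrite admissibleU1.
by move=> G; rewrite finset.sub1set; case: (e \in G); rewrite /= ?andbT ?andbF.
Qed.

Lemma sum_edge_cond :
  \sum_(G : {set edge n} | cond G && ~~ has_short_cycle l G) gnp_weight p G =
  p / (1 - p) * \sum_(G | adm G && ~~ has_short_cycle l (e |: G)) gnp_weight p G
  + \sum_(G | adm G) gnp_weight p G.
Proof.
rewrite -sum_edge_in (bigID (fun G : {set edge n} => e \in G)) /=.
congr (_ + _); apply: eq_bigl => G.
  by case: (e \in G); rewrite /= ?andbT ?andbF.
by rewrite /admissible -!andbA.
Qed.

End EdgeSums.

(* With q = p / (1 - p), q t' / (q t' + t) is the probability of an edge whose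
   presence multiplies the weight by q, given weights t' and t for the graphs
   with and without it. *)
Lemma edge_ratio_bounds (R : realFieldType) (p eta t t' : R) :
  0 < p < 1 -> 0 <= eta -> 0 < t -> 0 <= t' <= t -> t - t' <= eta * t ->
  (1 - eta) * p <= p / (1 - p) * t' / (p / (1 - p) * t' + t) <= p.
Proof.
move=> /andP[p_gt0 p_lt1] eta_ge0 t_gt0 /andP[t'_ge0 t'_le] tt'.
set q := p / (1 - p).
have q_gt0 : 0 < q by rewrite divr_gt0 // subr_gt0.
have qp : q * (1 - p) = p by rewrite divfK // subr_eq0 eq_sym lt_eqF.
clearbody q.
have D_gt0 : 0 < q * t' + t by rewrite ltr_wpDl // mulr_ge0 // ltW.
rewrite ler_pdivlMr // ler_pdivrMr //; apply/andP; split; last first.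
  have : p * t' <= p * t by rewrite ler_pM2l.
  have : t' * (q * (1 - p) - p) = 0 by rewrite qp subrr mulr0.
  nra.
have [c_le0|c_gt0] := leP (1 - eta) 0.
  apply: le_trans (_ : 0 <= q * t'); last exact: mulr_ge0 (ltW q_gt0) t'_ge0.
  by rewrite !mulr_le0_ge0 // ltW.
have : 0 <= (t' - (1 - eta) * t) * (q * (1 - (1 - eta) * p)).
  by rewrite !mulr_ge0 ?(ltW q_gt0) //; nra.
have : 0 <= (1 - eta) * t * p * q * eta by rewrite !mulr_ge0 // ltW.
have : (1 - eta) * t * (q * (1 - p) - p) = 0 by rewrite qp subrr mulr0.
nra.
Qed.

Lemma gtilde_cond_edge_bounds (R : realType) n l (lam eta : R)
    (E0 E1 : {set edge n}) (e : edge n) :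
  0 < lam / n%:R <= 2^-1 -> [disjoint E0 & E1] -> e \notin E0 -> e \notin E1 ->
  ~~ has_short_cycle l (e |: E1) ->
  (#|touched (e |: E1)|%:R : R) ^+ 2 <= n%:R ->
  (l.+1)%:R * (#|touched (e |: E1)|%:R ^+ 2 / n%:R) *
    (n%:R * (lam / n%:R / (1 - lam / n%:R)) + 1) ^+ l <= eta ->
  let P := gtilde_cond l lam (fun G => e \in G)
             (fun G => (E1 \subset G) && (G \subset ~: E0)) in
  (1 - eta) * (lam / n%:R) <= P /\ P <= lam / n%:R.
Proof.
move=> p_bounds dE0E1 eE0 eE1 noE1 touched_le eta_ge P.
have n_gt0 : (0 < n)%N.
  by rewrite lt0n; apply: contraTneq p_bounds => ->; rewrite invr0 mulr0 ltxx.
have p_lt1 : lam / n%:R < 1 by case/andP: p_bounds => _; lra.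
rewrite /P gtilde_condE; last by case/andP: p_bounds => ->.
have p_neq1 : lam / n%:R != 1 by rewrite lt_eqF.
rewrite (sum_edge_in l p_neq1 eE0 eE1) (sum_edge_cond l p_neq1 eE0 eE1).
move: (lam / n%:R) p_bounds p_lt1 eta_ge {p_neq1} => p /andP[p_gt0 p_le_half] p_lt1 eta_ge.
have q_ge0 : 0 <= p / (1 - p) by rewrite divr_ge0 ?subr_ge0 ?ltW.
have w_ge0 (G : {set edge n}) : 0 <= gnp_weight p G.
  by apply: gnp_weight_ge0; rewrite !ltW.
set S := \sum_(G | admissible l E0 E1 e G) gnp_weight p G.
set S' := \sum_(G | admissible l E0 E1 e G && ~~ has_short_cycle l (e |: G)) gnp_weight p G.
have S_gt0 : 0 < S.
  apply: lt_le_trans (ler_sum_term (i0 := E1) _ (fun G _ => w_ge0 G)).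
    by apply: gnp_weight_gt0; rewrite p_gt0.
  rewrite /admissible fintype.subxx -finset.disjoints_subset disjoint_sym dE0E1 eE1 andbT.
  by apply: contra noE1; apply/has_short_cycleS/finset.subsetUr.
have S'_le : S' <= S by apply: ler_sum_subpred => [G /andP[]|].
have bad_le : S - S' <= eta * S.
  rewrite {1}/S (bigID (fun G => has_short_cycle l (e |: G))) /= addrK.
  apply: le_trans (sum_bad_le E0 (ltW p_gt0) p_le_half noE1) _.
  rewrite -/S [eta * S]mulrC ler_wpM2l ?(ltW S_gt0) //; apply: le_trans eta_ge.
  exact: sum_codes_le.
have eta_ge0 : 0 <= eta.
  by rewrite -(pmulr_lge0 _ S_gt0); apply: le_trans bad_le; rewrite subr_ge0.
by apply/andP; apply: edge_ratio_bounds; rewrite ?p_gt0 ?S'_le ?sumr_ge0.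
Qed.

(* Used with t = n^(1/24): then |W| <= 4 n^(1/3), (nq+1)^l <= n^(1/24) and
   16 (l+1) <= n^(1/24). *)
Lemma code_bound_poly (R : realFieldType) (t w D : R) (l : nat) :
  16 <= t ^+ 8 -> 0 <= w <= 4 * t ^+ 8 -> 1 <= D -> D ^+ l <= t ->
  16 * (l.+1)%:R <= t ->
  w ^+ 2 <= t ^+ 24 /\ (l.+1)%:R * (w ^+ 2 / t ^+ 24) * D ^+ l <= (t ^+ 6)^-1.
Proof.
move=> t8_ge /andP[w_ge0 w_le] D_ge1 Dl_le l_le.
have l_ge0 : 0 <= (l.+1)%:R :> R by [].
have t_gt0 : 0 < t by apply: lt_le_trans l_le; rewrite mulr_gt0 ?ltr0n.
set X := t ^+ 8 in t8_ge w_le.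
have X_gt0 : 0 < X by apply: lt_le_trans t8_ge.
have -> : t ^+ 24 = X ^+ 3 by rewrite -exprM.
have -> : (t ^+ 6)^-1 = t ^+ 2 / X.
  by rewrite /X; field; rewrite gt_eqF.
have w2_le : w ^+ 2 <= 16 * X ^+ 2 by nra.
split; first by apply: le_trans w2_le _; rewrite [X ^+ 3]exprS ler_pM2r ?exprn_gt0.
have D_ge0 : 0 <= D := le_trans ler01 D_ge1.
have wD_le : w ^+ 2 * D ^+ l <= 16 * X ^+ 2 * t by apply: ler_pM; rewrite ?exprn_ge0.
have l_le' : (l.+1)%:R <= t / 16 by rewrite ler_pdivlMr // mulrC.
have key : (l.+1)%:R * (w ^+ 2 * D ^+ l) <= t / 16 * (16 * X ^+ 2 * t).
  by apply: ler_pM; rewrite ?mulr_ge0 ?exprn_ge0.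
have -> : (l.+1)%:R * (w ^+ 2 / X ^+ 3) * D ^+ l = (l.+1)%:R * (w ^+ 2 * D ^+ l) / X ^+ 3.
  by rewrite -!mulrA (mulrC (X ^+ 3)^-1).
have -> : t ^+ 2 / X = t / 16 * (16 * X ^+ 2 * t) / X ^+ 3 by field; rewrite gt_eqF.
by rewrite ler_pM2r ?invr_gt0 ?exprn_gt0.
Qed.

Lemma odds_scaled_le (R : realFieldType) (lam N : R) : 0 < lam -> 2 * lam <= N ->
  N * (lam / N / (1 - lam / N)) <= 2 * lam.
Proof.
move=> lam_gt0 N_ge; have N_gt0 : 0 < N by apply: lt_le_trans N_ge; rewrite mulr_gt0.
have p_le : lam / N <= 2^-1 by rewrite ler_pdivrMr // mulrC ler_pdivlMr //; lra.
rewrite mulrA mulrCA divff ?gt_eqF // mulr1 ler_pdivrMr; last by lra.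
nra.
Qed.

(* expR (L/24) >= (1 + L/48)^2, which exceeds 16 (L + 1) once L/48 >= 767. *)
Lemma linear_le_expR (R : realType) (L : R) :
  48 * 768 <= L -> 16 * (L + 1) <= expR (L / 24).
Proof.
move=> L_ge; have -> : L / 24 = L / 48 * 2%:R by lra.
rewrite expRM_natr.
have : (1 + L / 48) ^+ 2 <= expR (L / 48) ^+ 2.
  by rewrite lerXn2r ?nnegrE ?expR_ge1Dx ?expR_ge0 //; lra.
nra.
Qed.

Lemma exprn_le_expR (R : realType) (a x : R) (l : nat) :
  0 < a -> l%:R * ln a <= x -> a ^+ l <= expR x.
Proof. by move=> a_gt0; rewrite -[a in a ^+ l]lnK ?posrE // -expRM_natl ler_expR. Qed.

Lemma large_n_bound (R : realType) (lam N e1 w : R) (l : nat) :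
  0 < lam -> expR (48 * 768) <= N -> 2 * lam <= N ->
  l%:R <= (24 * (ln (2 * lam + 1) + 1))^-1 * ln N ->
  e1 <= N `^ 3^-1 -> 0 <= w <= 2 * e1 + 2 ->
  w ^+ 2 <= N /\
  (l.+1)%:R * (w ^+ 2 / N) * (N * (lam / N / (1 - lam / N)) + 1) ^+ l <= N `^ (- 4^-1).
Proof.
move=> lam_gt0 N_ge N_ge2lam l_le e1_le /andP[w_ge0 w_le].
have N_gt0 : 0 < N := lt_le_trans (expR_gt0 _) N_ge.
set L := ln N in l_le; have L_ge : 48 * 768 <= L by rewrite -ler_expR lnK ?posrE.
set t := expR (L / 24).
have powN r : N `^ r = expR (L / 24 * (24 * r)).
  by rewrite /powR gt_eqF //; congr expR; rewrite /L; field.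
have eN : N = t ^+ 24 by rewrite -expRM_natr -[LHS]lnK ?posrE //; congr expR; rewrite /L; field.
have e3 : N `^ 3^-1 = t ^+ 8 by rewrite powN -expRM_natr; congr expR; congr (_ * _); field.
have e4 : N `^ (- 4^-1) = (t ^+ 6)^-1.
  by rewrite powN -expRM_natr -expRN; congr expR; field.
have t8_ge : 16 <= t ^+ 8.
  by rewrite -expRM_natr; apply: le_trans (expR_ge1Dx _); lra.
set c := ln (2 * lam + 1) in l_le.
have c_ge0 : 0 <= c by rewrite ln_ge0 // lerDr mulr_ge0 // ltW.
have l24_le : l%:R * (24 * (c + 1)) <= L.
  by move: l_le; rewrite mulrC ler_pdivlMr // mulr_gt0 //; lra.
have l_ge0 : 0 <= l%:R :> R by [].
have q_ge0 : 0 <= lam / N / (1 - lam / N).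
  by rewrite divr_ge0 ?divr_ge0 ?ltW // subr_gt0 ltr_pdivrMr // mul1r; lra.
have D_ge1 : 1 <= N * (lam / N / (1 - lam / N)) + 1 by rewrite lerDr mulr_ge0 // ltW.
have Dl_le : (N * (lam / N / (1 - lam / N)) + 1) ^+ l <= t.
  apply: le_trans (exprn_le_expR _ (_ : l%:R * c <= L / 24)); [|lra|nra].
  by rewrite lerXn2r ?nnegrE ?lerD2r ?odds_scaled_le //; lra.
have w_le4 : w <= 4 * t ^+ 8 by rewrite e3 in e1_le; lra.
have l16 : 16 * (l.+1)%:R <= t.
  apply: le_trans (linear_le_expR L_ge); rewrite -addn1 natrD; nra.
have [|w2_le eta_le] := code_bound_poly (w := w) t8_ge _ D_ge1 Dl_le l16; first by rewrite w_ge0.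
by rewrite -eN in w2_le eta_le; rewrite e4.
Qed.

Theorem lemma6 (R : realType) (lam : R) (ell : nat -> nat) :
  0 < lam ->
  (* ell(n) = o(log n) *)
  (forall eps : R, 0 < eps ->
     \forall n \near eventually, ((ell n)%:R <= eps * ln (n%:R : R))) ->
  \forall n \near eventually,
    forall (E0 E1 : {set edge n}) (e : edge n),
      [disjoint E0 & E1] -> e \notin E0 -> e \notin E1 ->
      (#|E1|%:R <= (n%:R : R) `^ (3^-1)) ->
      ~~ has_short_cycle (ell n) (e |: E1) ->
      let P := gtilde_cond (ell n) lam
                 (fun G => e \in G)
                 (fun G => (E1 \subset G) && (G \subset ~: E0)) in
      (1 - (n%:R : R) `^ (- 4^-1)) * (lam / n%:R) <= P /\ P <= lam / n%:R.
Proof.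
move=> lam_gt0 ell_small.
have eps_gt0 : 0 < (24 * (ln (2 * lam + 1) + 1))^-1 :> R.
  have : 0 <= ln (2 * lam + 1) by rewrite ln_ge0 // lerDr mulr_ge0 // ltW.
  by rewrite invr_gt0; lra.
move: (ell_small _ eps_gt0) (nbhs_infty_ger (2 * lam)) (nbhs_infty_ger (expR (48 * 768) : R)).
apply: filterS3 => n l_le n_ge2lam n_ge E0 E1 e dE0E1 eE0 eE1 E1_le noE1.
have n_gt0 : 0 < n%:R :> R := lt_le_trans (expR_gt0 _) n_ge.
have touched_le : 0 <= (#|touched (e |: E1)|%:R : R) <= 2 * #|E1|%:R + 2.
  have : (#|touched (e |: E1)| <= 2 * #|E1| + 2)%N.
    by apply: leq_trans (card_touched _) _; rewrite cardsU1 eE1 mulnDr addnC.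
  by rewrite -(ler_nat R) natrD natrM ler0n; lra.
have [touched_sq eta_le] := large_n_bound lam_gt0 n_ge n_ge2lam l_le E1_le touched_le.
apply: gtilde_cond_edge_bounds => //.
by rewrite divr_gt0 //= ler_pdivrMr // mulrC ler_pdivlMr //; lra.
Qed.
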